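(* Suppose $\xi_r(\varpi^N)<1/2$ for some $r\in\{0,\ldots,N\}$. Then for every $\hat A\in\arg\min_{A\in\mathbb{R}^{n\times s}}\mathcal{J}(A)$ and every $A\in\mathbb{R}^{n\times s}$, $$\|\phi(A)-\phi(\hat A)\|_1\le\frac{2}{1-2\xi_r(\varpi^N)}\,\delta_r(A).$$ Moreover, if there exists $\tilde A\in\mathbb{R}^{n\times s}$ with $\|\phi(\tilde A)\|_0\le r$, then $$\arg\min_{A}\mathcal{J}(A)=\{A\in\mathbb{R}^{n\times s}:\|\phi(A)\|_0\le r\}=\{A\in\mathbb{R}^{n\times s}:\phi(A)=\phi(\tilde A)\}.$$
   Context: Data: integers $n,s,N\ge1$ and a dataset $\varpi^N=((x_1,y_1),\ldots,(x_N,y_N))$ with $x_t\in\mathbb{R}^n$, $y_t\in\mathbb{R}$. Let $\mathbb{T}=\{1,\ldots,N\}$, $\mathbb{S}=\{1,\ldots,s\}$. For $A=[a_1\ \cdots\ a_s]\in\mathbb{R}^{n\times s}$, $\sigma_A:\mathbb{T}\to\mathbb{S}$ is a switching signal satisfying $\sigma_A(t)\in\arg\min_{i\in\mathbb{S}}|y_t-x_t^\top a_i|$ for all $t$, selected uniquely by a fixed rule depending only on $A$ and the data (among all admissible choices, one maximizing $\min_{i}|I_i(A)|$, ties then broken by assigning the smallest admissible index). $I_i(A)=\{t\in\mathbb{T}:\sigma_A(t)=i\}$. Define $\phi(A)=\big(y_1-x_1^\top a_{\sigma_A(1)},\ldots,y_N-x_N^\top a_{\sigma_A(N)}\big)^\top\in\mathbb{R}^N$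 and $\mathcal{J}(A)=\|\phi(A)\|_1=\sum_{t=1}^N\min_{i\in\mathbb{S}}|y_t-a_i^\top x_t|$. For $\mathcal{T}\subset\mathbb{T}$, $\phi_{\mathcal{T}}(A)$ is the subvector of $\phi(A)$ indexed by $\mathcal{T}$. $\|w\|_0$ is the number of nonzero entries of $w$; $\mathcal{S}_r=\{w\in\mathbb{R}^N:\|w\|_0\le r\}$, and $\delta_r(A)=\inf_{w\in\mathcal{S}_r}\|\phi(A)-w\|_1$ (sum of the $N-r$ smallest absolute entries of $\phi(A)$). The $r$-th concentration ratio is $$\xi_r(\varpi^N)=\sup\Big\{\frac{\|\phi_{\mathcal{T}}(A)-\phi_{\mathcal{T}}(A')\|_1}{\|\phi(A)-\phi(A')\|_1}: A,A'\in\mathbb{R}^{n\times s},\ \mathcal{T}\subset\mathbb{T},\ \phi(A)\ne\phi(A'),\ |\mathcal{T}|\le r\Big\}.$$ *)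

From HB Require Import structures.
From mathcomp Require Import all_boot all_order all_algebra.
From mathcomp Require Import boolp classical_sets reals.
Set Implicit Arguments. Unset Strict Implicit. Unset Printing Implicit Defensive.
Import Order.TTheory GRing.Theory Num.Theory.
Local Open Scope ring_scope.
Local Open Scope classical_set_scope.

Section Switched.
Variables (R : realType) (n s N : nat).
Variables (x : 'I_N -> 'cV[R]_n) (y : 'I_N -> R).

(* x_t^T a_i where a_i is the i-th column of A *)
Definition xa (A : 'M[R]_(n, s)) (t : 'I_N) (i : 'I_s) : R := ((x t)^T *m A) 0 i.

Definition res (A : 'M[R]_(n, s)) (t : 'I_N) (i : 'I_s) : R := y t - xa A t i.

Definition admissible (A : 'M[R]_(n, s)) (sg : {ffun 'I_N -> 'I_s}) : bool :=
  [forall t, forall i, `|res A t (sg t)| <= `|res A t i|].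

Definition Isize (sg : {ffun 'I_N -> 'I_s}) (i : 'I_s) : nat :=
  #|[set t | sg t == i]|.

(* min_i |I_i| (the neutral element N is an upper bound of all |I_i|) *)
Definition minsize (sg : {ffun 'I_N -> 'I_s}) : nat :=
  \big[minn/N]_(i : 'I_s) Isize sg i.

Definition maxmin A (sg : {ffun 'I_N -> 'I_s}) : bool :=
  admissible A sg &&
  [forall sg' : {ffun 'I_N -> 'I_s}, admissible A sg' ==> (minsize sg' <= minsize sg)%N].

Definition lexlt (sg sg' : {ffun 'I_N -> 'I_s}) : bool :=
  [exists t : 'I_N, [forall t' : 'I_N, (t' < t)%N ==> (sg t' == sg' t')] && (sg t < sg' t)%N].

Definition best A (sg : {ffun 'I_N -> 'I_s}) : bool :=
  maxmin A sg && [forall sg' : {ffun 'I_N -> 'I_s}, maxmin A sg' ==> (sg' == sg) || lexlt sg sg'].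

(* phi(A) as a row vector in R^N (the None branch only occurs when s = 0) *)
Definition phi (A : 'M[R]_(n, s)) : 'rV[R]_N :=
  match [pick sg | best A sg] with
  | Some sg => \row_t res A t (sg t)
  | None => 0
  end.

Definition l1 (w : 'rV[R]_N) : R := \sum_t `|w 0 t|.
Definition l0 (w : 'rV[R]_N) : nat := #|[set t | w 0 t != 0]|.
Definition l1_on (T : {set 'I_N}) (w : 'rV[R]_N) : R := \sum_(t in T) `|w 0 t|.

Definition J (A : 'M[R]_(n, s)) : R := l1 (phi A).

Definition is_argminJ (Ah : 'M[R]_(n, s)) : Prop := forall A, J Ah <= J A.

Definition delta (r : nat) (A : 'M[R]_(n, s)) : R :=
  inf [set l1 (phi A - w) | w in [set w : 'rV[R]_N | (l0 w <= r)%N]].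

Definition xi (r : nat) : R :=
  sup [set q | exists (A A' : 'M[R]_(n, s)) (T : {set 'I_N}),
         [/\ phi A <> phi A', (#|T| <= r)%N &
             q = l1_on T (phi A - phi A') / l1 (phi A - phi A')]].

End Switched.

From HB Require Import structures.
From mathcomp Require Import all_boot all_order all_algebra.
From mathcomp Require Import boolp classical_sets reals.
From mathcomp Require Import lra.
Set Implicit Arguments. Unset Strict Implicit. Unset Printing Implicit Defensive.
Import Order.TTheory GRing.Theory Num.Theory.
Local Open Scope ring_scope.
Local Open Scope classical_set_scope.

(* Proof strategy (a robust null-space-property argument for the residual map phi).
   Write w = phi(A) and h = phi(A) - phi(B).  For every index set T, splitting the
   l1 norm over T and its complement and applying the triangle inequality
   coordinatewise gives
       ||w - h||_1 >= ||w||_1 - 2 ||w_{T^c}||_1 + ||h||_1 - 2 ||h_T||_1 .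
   If |T| <= r, the definition of the concentration ratio gives
   ||h_T||_1 <= xi_r ||h||_1, and if T is the support of an r-sparse w', then
   ||w_{T^c}||_1 <= ||w - w'||_1.  Hence, for all A, B and every r-sparse w',
       J(A) - 2 ||phi(A) - w'||_1 + (1 - 2 xi_r) ||phi(A) - phi(B)||_1 <= J(B).
   Taking B a minimiser of J and the infimum over w' gives the error bound;
   taking A = At with phi(At) r-sparse and w' = phi(At) shows that At is a strict
   minimiser up to the value of phi, which yields the two set equalities. *)

Section L1Calculus.
Variables (R : realType) (N : nat).
Implicit Types (u v w h : 'rV[R]_N) (T : {set 'I_N}).

Definition support w : {set 'I_N} := [set t | w 0 t != 0].

Lemma l0_support w : l0 w = #|support w|.
Proof.
rewrite /l0; apply: eq_card => t; rewrite finset.inE.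
by apply/idP/idP; rewrite in_setE.
Qed.

Lemma l1_split T u : l1 u = l1_on T u + l1_on (~: T) u.
Proof.
rewrite /l1 /l1_on (bigID (fun t => t \in T)) /=; congr (_ + _).
by apply: eq_bigl => t; rewrite finset.in_setC.
Qed.

Lemma l1_on_ge0 T u : 0 <= l1_on T u.
Proof. exact: sumr_ge0. Qed.

Lemma l1_on_le T u : l1_on T u <= l1 u.
Proof. by rewrite (l1_split T u) lerDl l1_on_ge0. Qed.

Lemma l1_on0 T : l1_on T (0 : 'rV[R]_N) = 0.
Proof. by rewrite /l1_on big1 // => t _; rewrite mxE normr0. Qed.

Lemma l1_0 : l1 (0 : 'rV[R]_N) = 0.
Proof. by rewrite /l1 big1 // => t _; rewrite mxE normr0. Qed.

Lemma l1_gt0 u : u != 0 -> 0 < l1 u.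
Proof.
move=> u_neq0; rewrite lt_def sumr_ge0 // andbT.
apply: contra u_neq0; rewrite psumr_eq0 // => /allP u_eq0.
apply/eqP/rowP => t; rewrite mxE; apply/eqP; rewrite -normr_eq0.
by apply: u_eq0; rewrite mem_index_enum.
Qed.

(* Reverse triangle inequality, split along T: the mass of h inside T can
   cancel mass of w, but the mass of h outside T can only add to it. *)
Lemma l1_sub_lower T w h :
  l1 w - 2 * l1_on (~: T) w + l1 h - 2 * l1_on T h <= l1 (w - h).
Proof.
have inT : l1_on T w - l1_on T h <= l1_on T (w - h).
  rewrite /l1_on -sumrB; apply: ler_sum => t _; rewrite !mxE.
  by rewrite lerBlDr -[X in `|X| <= _](subrK (h 0 t)) ler_normD.
have outT : l1_on (~: T) h - l1_on (~: T) w <= l1_on (~: T) (w - h).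
  rewrite /l1_on -sumrB; apply: ler_sum => t _; rewrite !mxE.
  by rewrite lerBlDr distrC -[X in `|X| <= _](subrK (w 0 t)) ler_normD.
have := l1_split T w; have := l1_split T h; have := l1_split T (w - h).
lra.
Qed.

Lemma l1_off_support w v : l1_on (~: support v) w <= l1 (w - v).
Proof.
apply: le_trans (l1_on_le _ _); apply: ler_sum => t.
by rewrite finset.in_setC finset.inE negbK => /eqP vt0; rewrite !mxE vt0 subr0.
Qed.

End L1Calculus.

Section Concentration.
Variables (R : realType) (n s N : nat).
Variables (x : 'I_N -> 'cV[R]_n) (y : 'I_N -> R) (r : nat).
Local Notation phi := (phi x y).
Local Notation J := (J x y).
Local Notation xi := (xi s x y r).

Lemma xi_bound (A A' : 'M[R]_(n, s)) (T : {set 'I_N}) :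
  (#|T| <= r)%N -> l1_on T (phi A - phi A') <= xi * l1 (phi A - phi A').
Proof.
move=> cardT.
have [->|neqAA'] := eqVneq (phi A) (phi A').
  by rewrite subrr l1_on0 l1_0 mulr0.
have pos : 0 < l1 (phi A - phi A') by rewrite l1_gt0 // subr_eq0.
rewrite -ler_pdivrMr //; apply: ub_le_sup; last first.
  by exists A, A', T; split => //; apply/eqP.
exists 1 => q [B [B' [T' [_ _ ->]]]].
have [->|neq0] := eqVneq (l1 (phi B - phi B')) 0; first by rewrite invr0 mulr0.
by rewrite ler_pdivrMr ?mul1r ?l1_on_le // lt_def neq0 sumr_ge0.
Qed.

Lemma descent (A B : 'M[R]_(n, s)) (w' : 'rV[R]_N) : (l0 w' <= r)%N ->
  J A - 2 * l1 (phi A - w') + (1 - 2 * xi) * l1 (phi A - phi B) <= J B.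
Proof.
rewrite l0_support => sparse.
have phiB : phi B = phi A - (phi A - phi B) by rewrite opprB addrC subrK.
have := l1_sub_lower (support w') (phi A) (phi A - phi B); rewrite -phiB.
have := xi_bound A B sparse; have := l1_off_support (phi A) w'.
rewrite /J; lra.
Qed.

(* Delta is bounded below by any common lower bound of the distances of phi(A)
   to r-sparse vectors (the zero vector witnesses non-emptiness). *)
Lemma delta_ge (A : 'M[R]_(n, s)) (c : R) :
  (forall w' : 'rV[R]_N, (l0 w' <= r)%N -> c <= l1 (phi A - w')) ->
  c <= delta x y r A.
Proof.
move=> lb; apply: lb_le_inf; last by move=> _ [w' sparse <-]; exact: lb.
exists (l1 (phi A - 0)), 0 => //=.
by rewrite l0_support (eq_card0 (A := support 0)) // => t;
  rewrite finset.inE mxE eqxx.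
Qed.

Lemma argmin_error_bound (Ah A : 'M[R]_(n, s)) :
  xi < 1 / 2 -> is_argminJ x y Ah ->
  l1 (phi A - phi Ah) <= 2 / (1 - 2 * xi) * delta x y r A.
Proof.
move=> xi_small minAh.
have gap : 0 < 1 - 2 * xi by lra.
rewrite mulrC -ler_pdivrMr ?divr_gt0 // invf_div.
apply: delta_ge => w' sparse.
have := descent A Ah sparse; have := minAh A; lra.
Qed.

Lemma sparse_strict_min (At B : 'M[R]_(n, s)) : xi < 1 / 2 ->
  (l0 (phi At) <= r)%N -> phi B <> phi At -> J At < J B.
Proof.
move=> xi_small sparse neq.
have pos : 0 < l1 (phi At - phi B).
  by rewrite l1_gt0 // subr_eq0; apply/eqP => E; exact: neq (esym E).
have := descent At B sparse; rewrite subrr l1_0.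
have : 0 < (1 - 2 * xi) * l1 (phi At - phi B) by rewrite mulr_gt0 //; lra.
lra.
Qed.

End Concentration.

Theorem lemma3 (R : realType) (n s N : nat)
  (hn : (0 < n)%N) (hs : (0 < s)%N) (hN : (0 < N)%N)
  (x : 'I_N -> 'cV[R]_n) (y : 'I_N -> R) (r : nat) (hr : (r <= N)%N)
  (hxi : xi s x y r < 1 / 2) :
  (forall Ah : 'M[R]_(n, s), is_argminJ x y Ah ->
     forall A : 'M[R]_(n, s),
       l1 (phi x y A - phi x y Ah) <= 2 / (1 - 2 * xi s x y r) * delta x y r A) /\
  (forall At : 'M[R]_(n, s), (l0 (phi x y At) <= r)%N ->
     [set A : 'M[R]_(n, s) | is_argminJ x y A]
       = [set A : 'M[R]_(n, s) | (l0 (phi x y A) <= r)%N] /\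
     [set A : 'M[R]_(n, s) | (l0 (phi x y A) <= r)%N]
       = [set A : 'M[R]_(n, s) | phi x y A = phi x y At]).
Proof.
split=> [Ah minAh A|At sparseAt]; first exact: argmin_error_bound.
have sparse_min (A : 'M[R]_(n, s)) : (l0 (phi x y A) <= r)%N -> is_argminJ x y A.
  move=> sparseA B; have [eqBA|neq] := eqVneq (phi x y B) (phi x y A).
    by rewrite /J eqBA.
  by apply/ltW/(sparse_strict_min hxi sparseA)/eqP.
have min_eq (A : 'M[R]_(n, s)) : is_argminJ x y A -> phi x y A = phi x y At.
  move=> minA; apply: contrapT => neq.
  by have := sparse_strict_min hxi sparseAt neq; rewrite ltNge minA.
split; apply/seteqP; split => A /=.
- by move=> /min_eq ->.
- exact: sparse_min.
- by move=> /sparse_min /min_eq.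
- by move=> ->.
Qed.
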